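(* Let $\Omega=(0,L)^2$ with periodic boundary conditions, $M$ a positive integer, $h=L/M$, and let $\mathbb{V}_h\cong\mathbb{R}^{M^2}$ be the space of real grid functions on the periodic grid $\{(ih,jh):1\le i,j\le M\}$. Let $\Lambda_h$ be the standard five-point central-difference matrix of the Laplacian on this grid with periodic boundary conditions, and let $\varepsilon>0$. Let $0=t_0<t_1<\dots<t_N=T$ be a time grid with steps $\tau_k=t_k-t_{k-1}$, step ratios $r_k=\tau_k/\tau_{k-1}$ for $2\le k\le N$ and $r_1:=0$. Given $u^0\in\mathbb{V}_h$, consider the scheme $$D_2u^n=\varepsilon^2\Lambda_hu^n-f(u^n),\qquad n\ge1,$$ where $f(u)=u^{3}-u$ componentwise, $D_2u^1=(u^1-u^0)/\tau_1$ and, for $n\ge2$, $$D_2u^n=\frac{1+2r_n}{\tau_n(1+r_n)}(u^n-u^{n-1})-\frac{r_n^2}{\tau_n(1+r_n)}(u^{n-1}-u^{n-2}).$$ If $\tau_n<\frac{1+2r_n}{1+r_n}$ for $n\ge1$, then the scheme is uniquely solvable, i.e. for every $n\ge1$, given $u^0,\dots,u^{n-1}$ there exists a unique $u^n\in\mathbb{V}_h$ satisfying the $n$-th equation.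
   Context: $\Lambda_h$ is symmetric and negative semi-definite. Cubes and other nonlinear operations on vectors are taken componentwise. *)

From HB Require Import structures.
From mathcomp Require Import all_boot all_order all_algebra.
From mathcomp Require Import reals.
Set Implicit Arguments. Unset Strict Implicit. Unset Printing Implicit Defensive.
Import Order.TTheory GRing.Theory Num.Theory.
Local Open Scope ring_scope.

(* A grid function on the periodic grid {(ih,jh) : 1 <= i,j <= M}:
   entry (i,j) of an M x M matrix (index i : 'I_M stands for grid index i+1;
   with periodicity index M is identified with index 0). *)
Definition gridfun (R : realType) (M : nat) := 'M[R]_(M, M).

Definition Lap_h (R : realType) (M : nat) (h : R) (u : gridfun R M) : gridfun R M :=
  \matrix_(i, j)
    ((u (ordS i) j + u (ord_pred i) j + u i (ordS j) + u i (ord_pred j)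
      - 4 * u i j) / h ^+ 2).

Definition f_AC (R : realType) (M : nat) (u : gridfun R M) : gridfun R M :=
  \matrix_(i, j) (u i j ^+ 3 - u i j).

Definition step_ratio (R : realType) (tau : nat -> R) (k : nat) : R :=
  if (k <= 1)%N then 0 else tau k / tau k.-1.

(* BDF2 difference quotient D_2 u^n, given the candidate un = u^n and the
   previous values u1 = u^(n-1), u2 = u^(n-2) (u2 unused when n = 1). *)
Definition D2 (R : realType) (M : nat) (tau : nat -> R) (n : nat)
  (un u1 u2 : gridfun R M) : gridfun R M :=
  if n == 1%N then (tau 1)^-1 *: (un - u1)
  else let r := step_ratio tau n in
       ((1 + 2 * r) / (tau n * (1 + r))) *: (un - u1)
       - (r ^+ 2 / (tau n * (1 + r))) *: (u1 - u2).

Definition scheme_eq (R : realType) (M : nat) (h eps : R) (tau : nat -> R)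
  (n : nat) (u : nat -> gridfun R M) (v : gridfun R M) : Prop :=
  D2 tau n v (u n.-1) (u n.-2) = eps ^+ 2 *: Lap_h h v - f_AC v.

From HB Require Import structures.
From mathcomp Require Import all_boot all_order all_algebra.
From mathcomp Require Import all_classical all_reals all_analysis.
From mathcomp Require Import ring lra.
Import Order.TTheory GRing.Theory Num.Def Num.Theory.
Local Open Scope ring_scope.

(* At each node the n-th equation reads v^3 + c v = G + k (sum of the four
   neighbours of v), where k = eps^2/h^2, c = a - 1 + 4k and
   a = (1 + 2 r_n)/(tau_n (1 + r_n)) is the leading BDF2 coefficient; the
   step-size restriction says exactly a > 1, i.e. c > 4k.  Since x |-> x^3 + c x
   is a bijection of R with a 1/c-Lipschitz inverse, solving nodewise for v
   turns the scheme into a fixed-point problem for a 4k/c-contraction in the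
   max norm, and Banach's fixed-point theorem gives existence and uniqueness. *)

Section cubic.
Context {R : rcfType} {c : R}.
Hypothesis c_gt0 : 0 < c.

Lemma cubic_surj (y : R) : exists x : R, x ^+ 3 + c * x = y.
Proof.
pose p : {poly R} := 'X^3 + c%:P * 'X - y%:P.
have peval x : p.[x] = x ^+ 3 + c * x - y.
  by rewrite !(hornerD, hornerN, hornerM, hornerC, hornerX, hornerXn).
(* A root lies in [-t, t]: at t = |y|/c the linear term alone has size |y|. *)
pose t := `|y| / c.
have t_ge0 : 0 <= t by rewrite divr_ge0 // ltW.
have ct : c * t = `|y| by rewrite mulrC divfK ?gt_eqF.
have t3_ge0 : 0 <= t ^+ 3 by rewrite exprn_ge0.
have [x _ /rootP] : exists2 x, x \in `[- t, t] & root p x.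
  apply: poly_ivt; first lra.
  rewrite !peval.
  have -> : (- t) ^+ 3 = - t ^+ 3 by ring.
  rewrite mulrN ct.
  have := ler_norm y; have := ler_norm (- y); rewrite normrN; lra.
by rewrite peval => /eqP; rewrite subr_eq0 => /eqP; exists x.
Qed.

Lemma cubic_dist_ge (x z : R) :
  c * `|x - z| <= `|(x ^+ 3 + c * x) - (z ^+ 3 + c * z)|.
Proof.
have -> : (x ^+ 3 + c * x) - (z ^+ 3 + c * z) =
          (x - z) * (x ^+ 2 + x * z + z ^+ 2 + c) by ring.
have q_ge0 : 0 <= x ^+ 2 + x * z + z ^+ 2.
  by have := sqr_ge0 (x + z); have := sqr_ge0 x; have := sqr_ge0 z; nra.
rewrite normrM [X in _ <= _ * X]ger0_norm; last by rewrite addr_ge0 // ltW.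
by rewrite mulrC ler_wpM2l //; lra.
Qed.

Lemma cubic_inj : injective (fun x : R => x ^+ 3 + c * x).
Proof.
move=> x z /= xz; apply/eqP; rewrite -subr_eq0 -normr_eq0 eq_le normr_ge0 andbT.
by have := cubic_dist_ge x z; rewrite xz subrr normr0 pmulr_rle0.
Qed.

Lemma cubic_inverse : exists psi : R -> R,
  cancel psi (fun x => x ^+ 3 + c * x) /\
  forall y z, `|psi y - psi z| <= `|y - z| / c.
Proof.
have [psi psiK] := boolp.choice cubic_surj.
exists psi; split => // y z.
rewrite ler_pdivlMr // mulrC.
by have := cubic_dist_ge (psi y) (psi z); rewrite !psiK.
Qed.

End cubic.

Lemma contraction_exists_unique_fixpoint {R : realType}
    {X : completeNormedModType R} {f : X -> X} {q : R} :
  0 <= q -> q < 1 -> (forall x y, `|f x - f y| <= q * `|x - y|) ->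
  exists! p, p = f p.
Proof.
move=> q_ge0 q_lt1 f_lip.
pose F : {fun [set: X] >-> [set: X]} := totalfun_ setT f.
have F_contr : is_contraction F.
  by exists (NngNum q_ge0); split => // -[x y] _; exact: f_lip.
have [p _ pE] := banach_fixed_point F_contr closedT (ex_intro _ 0 I).
exists p; split => // z zE.
exact: contraction_fixpoint_unique F_contr I I pE zE.
Qed.

Section mx_norm_entries.
Context {K : realDomainType} {m n : nat}.

Lemma mx_norm_entry_le (A : 'M[K]_(m, n)) i j : `|A i j| <= `|A|.
Proof.
by rewrite [leRHS]/normr /= mx_normrE; apply/bigmax_geP; right; exists (i, j).
Qed.

Lemma mx_norm_le (A : 'M[K]_(m, n)) e :
  0 <= e -> (forall i j, `|A i j| <= e) -> `|A| <= e.
Proof.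
move=> e_ge0 Ae; rewrite [leLHS]/normr /= mx_normrE.
by apply/bigmax_leP; split => // -[i j] _; exact: Ae.
Qed.

End mx_norm_entries.

(* Makes 'M[R]_(m, n) a completeNormedModType, a join HB does not infer. *)
HB.instance Definition _ (R : realType) (m n : nat) :=
  NormedModule.copy 'M[R]_(m, n) 'M[R]_(m, n).

Section grid.
Context {R : realType} {m n : nat}.
Implicit Types (v w G : 'M[R]_(m, n)).

Definition neighbour_sum v i j :=
  v (ordS i) j + v (ord_pred i) j + v i (ordS j) + v i (ord_pred j).

Lemma neighbour_sumB v w i j :
  neighbour_sum v i j - neighbour_sum w i j = neighbour_sum (v - w) i j.
Proof. by rewrite /neighbour_sum !mxE; ring. Qed.

Lemma neighbour_sum_norm_le v i j : `|neighbour_sum v i j| <= 4 * `|v|.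
Proof.
have := mx_norm_entry_le v (ordS i) j; have := mx_norm_entry_le v (ord_pred i) j.
have := mx_norm_entry_le v i (ordS j); have := mx_norm_entry_le v i (ord_pred j).
have := ler_normD (v (ordS i) j + v (ord_pred i) j + v i (ordS j)) (v i (ord_pred j)).
have := ler_normD (v (ordS i) j + v (ord_pred i) j) (v i (ordS j)).
have := ler_normD (v (ordS i) j) (v (ord_pred i) j).
rewrite /neighbour_sum; lra.
Qed.

Lemma grid_cubic_exists_unique (c k : R) G : 0 <= k -> 4 * k < c ->
  exists! v, forall i j, v i j ^+ 3 + c * v i j = G i j + k * neighbour_sum v i j.
Proof.
move=> k_ge0 kc; have c_gt0 : 0 < c by lra.
have [psi [psiK psi_lip]] := cubic_inverse c_gt0.
pose T v := \matrix_(i, j) psi (G i j + k * neighbour_sum v i j).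
have fixE v : (forall i j, v i j ^+ 3 + c * v i j = G i j + k * neighbour_sum v i j)
              <-> v = T v.
  split => vE; last by move=> i j; rewrite {1 2}vE mxE psiK.
  apply/matrixP => i j; rewrite mxE.
  by apply: (cubic_inj c_gt0); rewrite /= psiK vE.
have q_ge0 : 0 <= 4 * k / c by rewrite divr_ge0 ?mulr_ge0 // ltW.
have T_lip v w : `|T v - T w| <= 4 * k / c * `|v - w|.
  apply: mx_norm_le => [|i j]; first by rewrite mulr_ge0.
  rewrite !mxE; apply: le_trans (psi_lip _ _) _.
  rewrite opprD addrACA subrr add0r -mulrBr neighbour_sumB normrM ger0_norm //.
  rewrite [leRHS]mulrAC ler_pM2r ?invr_gt0 // [4 * k]mulrC -mulrA.
  by rewrite ler_wpM2l // neighbour_sum_norm_le.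
have q_lt1 : 4 * k / c < 1 by rewrite ltr_pdivrMr // mul1r.
have [p [pE p_uniq]] := contraction_exists_unique_fixpoint q_ge0 q_lt1 T_lip.
exists p; split; first exact/fixE.
by move=> w /fixE; exact: p_uniq.
Qed.

End grid.

Lemma subr_eq_iff {V : zmodType} {a b c d : V} : a - b = c - d -> (a = b <-> c = d).
Proof.
move=> E; split=> H; apply/eqP; rewrite -subr_eq0.
- by rewrite -E H subrr.
- by rewrite E H subrr.
Qed.

Section scheme.
Context {R : realType} {M : nat}.
Variables (tau : nat -> R) (n : nat).
Local Notation r := (step_ratio tau n).

Definition bdf2_lead : R := (1 + 2 * r) / (tau n * (1 + r)).

Definition bdf2_history (u1 u2 : gridfun R M) : gridfun R M :=
  if n == 1%N then 0 else (r ^+ 2 / (tau n * (1 + r))) *: (u1 - u2).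

Lemma step_ratio_ge0 : (forall k, (1 <= k <= n)%N -> 0 < tau k) -> 0 <= r.
Proof.
move=> tau_pos; rewrite /step_ratio; case: leqP => // n_gt1.
have tau_n_gt0 : 0 < tau n by rewrite tau_pos // leqnn ltnW.
have tau_pred_gt0 : 0 < tau n.-1 by rewrite tau_pos // ltn_predRL n_gt1 leq_pred.
by rewrite divr_ge0 // ltW.
Qed.

Lemma bdf2_lead_gt1 : 0 < tau n -> 0 <= r -> tau n < (1 + 2 * r) / (1 + r) ->
  1 < bdf2_lead.
Proof.
move=> tau_gt0 r_ge0; rewrite /bdf2_lead !ltr_pdivlMr ?mulr_gt0 //; lra.
Qed.

Lemma D2E (v u1 u2 : gridfun R M) :
  D2 tau n v u1 u2 = bdf2_lead *: (v - u1) - bdf2_history u1 u2.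
Proof.
rewrite /D2 /bdf2_history /bdf2_lead; case: eqP => [->|_] //.
by rewrite /step_ratio /= subr0 mulr0 addr0 mulr1 div1r.
Qed.

Lemma scheme_eqE (h eps : R) (u : nat -> gridfun R M) (v : gridfun R M) :
  scheme_eq h eps tau n u v <->
  forall i j, v i j ^+ 3 + (bdf2_lead - 1 + 4 * (eps ^+ 2 / h ^+ 2)) * v i j =
    (bdf2_lead *: u n.-1 + bdf2_history (u n.-1) (u n.-2)) i j
    + eps ^+ 2 / h ^+ 2 * neighbour_sum v i j.
Proof.
rewrite /scheme_eq D2E -matrixP; split => vE i j.
- by apply: (subr_eq_iff (V := R) _).1 (vE i j); rewrite !mxE /neighbour_sum; ring.
- by apply: (subr_eq_iff (V := R) _).2 (vE i j); rewrite !mxE /neighbour_sum; ring.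
Qed.

End scheme.

Theorem lemma3p2 (R : realType) (L : R) (M N : nat) (eps : R) (tau : nat -> R) :
  0 < L -> (0 < M)%N -> 0 < eps ->
  (forall k, (1 <= k <= N)%N -> 0 < tau k) ->
  (forall n, (1 <= n <= N)%N ->
     tau n < (1 + 2 * step_ratio tau n) / (1 + step_ratio tau n)) ->
  forall n, (1 <= n <= N)%N ->
  forall u : nat -> gridfun R M,
    exists! v : gridfun R M, scheme_eq (L / M%:R) eps tau n u v.
Proof.
move=> _ _ _ tau_pos step_cond n nN u.
have tau_pos_n k : (1 <= k <= n)%N -> 0 < tau k.
  case/andP: nN => _ n_leN /andP[k_ge1 k_len].
  by rewrite tau_pos // k_ge1 (leq_trans k_len).
have lead_gt1 : 1 < bdf2_lead tau n.
  apply: bdf2_lead_gt1; first by rewrite tau_pos.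
    exact: step_ratio_ge0.
  exact: step_cond.
pose k := eps ^+ 2 / (L / M%:R) ^+ 2.
have k_ge0 : 0 <= k by rewrite divr_ge0 ?sqr_ge0.
have [|v [vE v_uniq]] := grid_cubic_exists_unique (bdf2_lead tau n - 1 + 4 * k) k
  (bdf2_lead tau n *: u n.-1 + bdf2_history tau n (u n.-1) (u n.-2)) k_ge0.
  by lra.
exists v; split; first exact/scheme_eqE.
by move=> w /scheme_eqE; exact: v_uniq.
Qed.
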